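(* Let $k\ge1$, let $F$ be a 2-factor on $4k$ vertices, and let $C$ be a red/blue-coloring of $K_{4k}$ such that the red edges form two disjoint cliques of size $2k$ each (all other edges being blue). Then $C$ contains a copy of $F$ with at least $4k-2$ red edges and a copy of $F$ with at least $8k/3$ blue edges.
   Context: A 2-factor on $N$ vertices is a 2-regular graph on $N$ vertices. A copy of $F$ is a subgraph isomorphic to $F$. *)

From mathcomp Require Import all_boot.
Set Implicit Arguments. Unset Strict Implicit. Unset Printing Implicit Defensive.

Definition two_factor (V : finType) (F : rel V) : Prop :=
  symmetric F /\ irreflexive F /\ forall v : V, #|[set u | F v u]| = 2.

(* The red/blue colouring of K_n determined by a set A: an edge {x,y} is red iff
   x and y lie on the same side of the partition (A, ~A); otherwise blue. *)
Definition two_clique_red (n : nat) (A : {set 'I_n}) (x y : 'I_n) : bool :=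
  (x \in A) == (y \in A).

Definition col_edges (V : finType) (n : nat) (F : rel V) (f : V -> 'I_n)
    (col : rel 'I_n) : nat :=
  #|[set e : {set V} | [exists u, exists v,
        [&& e == [set u; v], F u v & col (f u) (f v)]]]|.

From mathcomp Require Import all_boot zify.
Set Implicit Arguments. Unset Strict Implicit. Unset Printing Implicit Defensive.

(* Mapping a set S of 2k vertices of F onto one red clique makes the blue edges
   of the copy exactly the edges of F crossing the cut (S, ~S); since F has 4k
   edges, it suffices to find bisections crossed by at most 2 and by at least
   8k/3 edges.  Adding to S a vertex with c crossing edges changes the cut by
   2 - 2c, and while the cut is nonempty some outside vertex has c >= 1, so the
   greedily grown bisection is crossed by at most 2 edges.  A maximum bisection
   admits no improving swap; this forces every vertex to have a crossing edge
   and every crossing edge to have an endpoint with two, so at most cut-many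
   vertices have exactly one crossing edge, whence 2 * 4k <= 3 * cut. *)

Lemma eq_set2 (T : finType) (a b u v : T) : a != b ->
  ([set a; b] == [set u; v]) = ((a, b) == (u, v)) || ((a, b) == (v, u)).
Proof.
move=> ab; rewrite !xpair_eqE; apply/eqP/idP => [E|]; last first.
  by case/orP => /andP [/eqP-> /eqP->] //; rewrite setUC.
have := set21 a b; have := set22 a b; rewrite E !inE.
by case/orP => /eqP bE /orP [] /eqP aE; move: ab; rewrite aE bE ?eqxx ?orbT.
Qed.

Lemma card_edges (V : finType) (R : rel V) : symmetric R -> irreflexive R ->
  2 * #|[set e : {set V} | [exists u, exists v, (e == [set u; v]) && R u v]]|
    = \sum_u \sum_v R u v.
Proof.
move=> R_sym R_irr.
pose P := [set p : V * V | R p.1 p.2].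
pose h (p : V * V) := [set p.1; p.2].
have edgesE : [set e | [exists u, exists v, (e == [set u; v]) && R u v]] = h @: P.
  apply/setP => e; rewrite inE; apply/existsP/imsetP => [[u /existsP [v]]|].
    by case/andP => /eqP-> Ruv; exists (u, v); rewrite ?inE.
  case=> [[u v]]; rewrite inE => Ruv ->.
  by exists u; apply/existsP; exists v; rewrite eqxx.
have fiberE p : p \in P -> [set q in P | h q == h p] = [set p; (p.2, p.1)].
  case: p => u v; rewrite inE /= => Ruv; apply/setP => -[a b].
  rewrite in_set inE in_set2 /h /=; case Rab: (R a b).
    by rewrite andTb eq_set2 //; apply: contraTneq Rab => ->; rewrite R_irr.
  rewrite andFb; apply/esym/norP.
  by split; apply: contraFneq Rab => -[-> ->] //; rewrite R_sym.
have cardP : #|P| = \sum_u \sum_v R u v.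
  rewrite pair_big -sum1_card big_mkcond; apply: eq_bigr => p _.
  by rewrite inE; case: (R _ _).
rewrite edgesE -cardP -[#|P|]sum1_card (partition_big_imset h) mulnC -sum_nat_const.
apply: eq_bigr => _ /imsetP [[u v] Puv ->]; rewrite sum1dep_card fiberE // cards2.
have uv : u != v by apply: contraTneq Puv => ->; rewrite inE /= R_irr.
by rewrite /= xpair_eqE (negbTE uv).
Qed.

Lemma col_edgesE (V : finType) n (F : rel V) (f : V -> 'I_n) (col : rel 'I_n) :
  symmetric F -> irreflexive F -> symmetric col ->
  2 * col_edges F f col = \sum_u \sum_v (F u v && col (f u) (f v)).
Proof.
move=> F_sym F_irr col_sym.
apply: (@card_edges _ (fun u v => F u v && col (f u) (f v))) => [u v|u].
  by rewrite F_sym col_sym.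
by rewrite F_irr.
Qed.

Section Transfer.
Variables (T U : eqType) (u0 : U) (s : seq T) (t : seq U).
Hypothesis size_st : size s = size t.

Definition transfer (x : T) : U := nth u0 t (index x s).

Lemma transfer_mem x : x \in s -> transfer x \in t.
Proof. by move=> sx; rewrite mem_nth // -size_st index_mem. Qed.

Lemma transfer_inj : uniq t -> {in s &, injective transfer}.
Proof.
move=> t_uniq x y sx sy /eqP; rewrite nth_uniq -?size_st ?index_mem // => /eqP.
exact: index_inj.
Qed.

End Transfer.

Lemma exists_inj_transport_set (V W : finType) (w0 : W) (S : {set V}) (A : {set W}) :
  #|V| = #|W| -> #|S| = #|A| ->
  exists f : V -> W, injective f /\ forall v, (f v \in A) = (v \in S).
Proof.
move=> eq_VW eq_SA.
have eq_SAC : #|~: S| = #|~: A| by have := cardsC S; have := cardsC A; lia.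
pose f v := if v \in S then transfer w0 (enum S) (enum A) v
            else transfer w0 (enum (~: S)) (enum (~: A)) v.
have fA v : (f v \in A) = (v \in S).
  rewrite /f; case: ifP => Sv.
    by rewrite -mem_enum transfer_mem ?mem_enum // -!cardE.
  apply/negbTE; rewrite -in_setC -mem_enum.
  by rewrite transfer_mem ?mem_enum ?inE ?Sv // -!cardE.
exists f; split=> // v1 v2 f12.
have S12 : (v1 \in S) = (v2 \in S) by rewrite -!fA f12.
move: f12; rewrite /f -S12; case: ifP => S1.
  by apply: transfer_inj; rewrite ?enum_uniq ?mem_enum -?S12 // -!cardE.
by apply: transfer_inj; rewrite ?enum_uniq ?mem_enum ?inE -?S12 ?S1 // -!cardE.
Qed.

Lemma sum_nat_gt0_exists (I : finType) (P : pred I) (E : I -> nat) :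
  0 < \sum_(i | P i) E i -> exists2 i, P i & 0 < E i.
Proof.
rewrite lt0n sum_nat_eq0 negb_forall_in => /exists_inP [i Pi].
by exists i; rewrite ?lt0n.
Qed.

Section Cuts.
Variables (V : finType) (F : rel V).
Hypotheses (F_sym : symmetric F) (F_irr : irreflexive F).
Implicit Types (S T : {set V}) (u v w x : V).

Definition deg (w : V) : nat := \sum_v F w v.

Definition crossing (S : {set V}) (u v : V) : bool := (u \in S) != (v \in S).

Definition cut_deg (S : {set V}) (w : V) : nat := \sum_v (F w v && crossing S w v).

Definition cut_size (S : {set V}) : nat := \sum_(u in S) cut_deg S u.

Lemma crossingC S u v : crossing S u v = crossing S v u.
Proof. by rewrite /crossing eq_sym. Qed.

Lemma cut_deg_setC S w : cut_deg (~: S) w = cut_deg S w.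
Proof.
by apply: eq_bigr => v _; rewrite /crossing !inE; case: (v \in S); case: (w \in S).
Qed.

Lemma cut_deg_in S u : u \in S -> cut_deg S u = \sum_(v in ~: S) F u v.
Proof.
move=> Su; rewrite [RHS]big_mkcond; apply: eq_bigr => v _.
by rewrite /crossing Su inE; case: (v \in S); case: (F u v).
Qed.

Lemma cut_deg_out S u : u \notin S -> cut_deg S u = \sum_(v in S) F u v.
Proof.
move=> Su; rewrite [RHS]big_mkcond; apply: eq_bigr => v _.
by rewrite /crossing (negbTE Su); case: (v \in S); case: (F u v).
Qed.

Lemma cut_deg_le S w : cut_deg S w <= deg w.
Proof. by apply: leq_sum => v _; case: (F w v) => //; apply: leq_b1. Qed.

Lemma cut_size_out S : \sum_(x in ~: S) cut_deg S x = cut_size S.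
Proof.
rewrite (eq_bigr (fun x => \sum_(u in S) F x u)); last first.
  by move=> x; rewrite inE => Sx; rewrite cut_deg_out.
rewrite exchange_big; apply: eq_bigr => u Su.
by rewrite cut_deg_in //; apply: eq_bigr => x _; rewrite F_sym.
Qed.

Lemma sum_cut_deg S : \sum_w cut_deg S w = 2 * cut_size S.
Proof.
rewrite mul2n -addnn -{2}cut_size_out (bigID (mem S)) /=.
by congr (_ + _); apply: eq_bigl => x; rewrite ?inE.
Qed.

Lemma cut_deg_flip S S' w :
  (forall v, v != w -> (v \in S') = (v \in S)) -> (w \in S') != (w \in S) ->
  cut_deg S' w + cut_deg S w = deg w.
Proof.
move=> S'E S'w; rewrite -big_split; apply: eq_bigr => v _ /=.
have [->|vw] := eqVneq v w; first by rewrite F_irr.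
move: S'w; rewrite /crossing (S'E v vw).
by case: (F w v); case: (w \in S'); case: (w \in S); case: (v \in S).
Qed.

Lemma cut_size_flip S S' w :
  (forall v, v != w -> (v \in S') = (v \in S)) -> (w \in S') != (w \in S) ->
  cut_size S' + 2 * cut_deg S w = cut_size S + deg w.
Proof.
move=> S'E S'w.
pose rest T := \sum_(u | u != w) \sum_(v | v != w) (F u v && crossing T u v).
have sumE T : 2 * cut_size T = 2 * cut_deg T w + rest T.
  rewrite -sum_cut_deg (bigD1 w) //=.
  rewrite (eq_bigr (fun u => (F u w && crossing T u w) +
      \sum_(v | v != w) (F u v && crossing T u v))); last first.
    by move=> u _; rewrite /cut_deg (bigD1 w).
  rewrite big_split /= addnA; congr (_ + _).
  suff -> : \sum_(u | u != w) (F u w && crossing T u w) = cut_deg T w.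
    by rewrite addnn mul2n.
  rewrite [RHS](bigD1 w) //= F_irr add0n.
  by apply: eq_bigr => u _; rewrite F_sym crossingC.
have restE : rest S' = rest S.
  by apply: eq_bigr => u uw; apply: eq_bigr => v vw; rewrite /crossing !S'E.
have := sumE S; have := sumE S'; have := cut_deg_flip S'E S'w; rewrite restE; lia.
Qed.

Lemma cut_size_gt0 S : 0 < cut_size S -> exists2 x, x \notin S & 0 < cut_deg S x.
Proof.
move=> /sum_nat_gt0_exists [u Su]; rewrite cut_deg_in // => /sum_nat_gt0_exists [x].
rewrite inE => Sx Fux; exists x => //.
by rewrite cut_deg_out // (bigD1 u) //= F_sym; case: (F u x) Fux.
Qed.

Section Regular.
Hypothesis F_reg : forall w, deg w = 2.

Lemma cut_deg_le2 S w : cut_deg S w <= 2.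
Proof. by rewrite -(F_reg w) cut_deg_le. Qed.

Lemma cut_size_add S z :
  z \notin S -> cut_size (z |: S) + 2 * cut_deg S z = cut_size S + 2.
Proof.
move=> Sz; rewrite -[in RHS](F_reg z); apply: cut_size_flip.
  by move=> v vz; rewrite !inE (negbTE vz).
by rewrite !inE eqxx Sz.
Qed.

Lemma exists_small_cut m :
  m <= #|V| -> exists2 S : {set V}, #|S| = m & cut_size S <= 2.
Proof.
elim: m => [|m IHm] le_m.
  by exists set0; rewrite ?cards0 // /cut_size big_pred0 // => u; rewrite inE.
have [S cardS cutS] := IHm (ltnW le_m).
have [z Sz le_cut] : exists2 z, z \notin S & cut_size S <= 2 * cut_deg S z.
  have [cut0|/cut_size_gt0 [z Sz z_pos]] := posnP (cut_size S).
    have /card_gt0P [z] : 0 < #|~: S| by have := cardsC S; lia.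
    by rewrite inE => Sz; exists z; rewrite // cut0.
  by exists z => //; lia.
exists (z |: S); first by rewrite cardsU1 Sz cardS.
have := cut_size_add Sz; lia.
Qed.

(* Exchanging u and x changes the cut size by 4 + 2 F u x - 2 (cut_deg u + cut_deg x). *)
Definition swap_optimal S :=
  forall u x, u \in S -> x \notin S -> 2 + F u x <= cut_deg S u + cut_deg S x.

Lemma max_cut_swap_optimal S :
  (forall T, #|T| = #|S| -> cut_size T <= cut_size S) -> swap_optimal S.
Proof.
move=> S_max u x Su Sx.
pose S1 := S :\ u.
have cut1 : cut_size S1 + 2 * cut_deg S u = cut_size S + 2.
  rewrite -[in RHS](F_reg u); apply: cut_size_flip.
    by move=> v vu; rewrite !inE vu.
  by rewrite !inE eqxx Su.
have S1x : x \notin S1 by rewrite !inE (negbTE Sx) andbF.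
have cut2 := cut_size_add S1x.
have deg1 : cut_deg S1 x + F u x = cut_deg S x.
  rewrite !cut_deg_out // [RHS](bigD1 u Su) /= F_sym addnC; congr (_ + _).
  by apply: eq_bigl => v; rewrite !inE andbC.
have := S_max (x |: S1).
by rewrite cardsU1 S1x [in RHS](cardsD1 u S) Su => /(_ erefl); lia.
Qed.

Lemma swap_optimal_setC S : swap_optimal S -> swap_optimal (~: S).
Proof.
move=> S_opt u x; rewrite !inE negbK => Su Sx.
by rewrite !cut_deg_setC F_sym [in X in _ <= X]addnC; apply: S_opt.
Qed.

Lemma swap_optimal_edge S x y : swap_optimal S ->
  F x y -> crossing S x y -> 3 <= cut_deg S x + cut_deg S y.
Proof.
move=> S_opt Fxy; rewrite /crossing.
have [Sx|Sx] := boolP (x \in S); have [Sy|Sy] := boolP (y \in S) => // _.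
  by have := S_opt x y Sx Sy; rewrite Fxy.
by have := S_opt y x Sy Sx; rewrite F_sym Fxy; lia.
Qed.

Lemma swap_optimal_cut_deg_gt0 S w :
  #|S| <= #|~: S| -> swap_optimal S -> w \in S -> 0 < cut_deg S w.
Proof.
move=> le_S S_opt Sw; rewrite lt0n; apply/negP => /eqP cw0.
have out2 : \sum_(x in ~: S) cut_deg S x = #|~: S| * 2.
  rewrite -sum_nat_const; apply: eq_bigr => x; rewrite inE => Sx.
  by have := S_opt w x Sw Sx; have := cut_deg_le2 S x; lia.
have in_le : cut_size S + 2 <= #|S| * 2.
  rewrite /cut_size (big_setD1 w Sw) /= cw0 (cardsD1 w S) Sw mulnDl -sum_nat_const.
  by rewrite add0n addnC leq_add2l; apply: leq_sum => u _; apply: cut_deg_le2.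
have := cut_size_out S; lia.
Qed.

Lemma bisection_cut_deg_gt0 S w :
  #|S| = #|~: S| -> swap_optimal S -> 0 < cut_deg S w.
Proof.
move=> eq_S S_opt; have [Sw|Sw] := boolP (w \in S).
  by apply: swap_optimal_cut_deg_gt0 => //; rewrite eq_S.
rewrite -cut_deg_setC; apply: swap_optimal_cut_deg_gt0; rewrite ?setCK ?eq_S ?inE //.
exact: swap_optimal_setC.
Qed.

Lemma bisection_cut_size_large S :
  #|S| = #|~: S| -> swap_optimal S -> 2 * #|V| <= 3 * cut_size S.
Proof.
move=> eq_S S_opt.
pose one x : nat := cut_deg S x == 1.
have oneE x : one x = \sum_y one x * (F x y && crossing S x y).
  by rewrite -big_distrr /= -/(cut_deg S x) /one; case: eqP => [->|].
(* Each crossing edge has at most one endpoint of cut degree 1. *)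
have ones_le : 2 * \sum_x one x <= 2 * cut_size S.
  rewrite -sum_cut_deg (eq_bigr _ (fun x _ => oneE x)) mul2n -addnn.
  rewrite {2}exchange_big -big_split /=; apply: leq_sum => x _.
  rewrite -big_split; apply: leq_sum => y _ /=.
  rewrite (F_sym y) (crossingC S y).
  case Fxy: (F x y); case cr: (crossing S x y); rewrite /= ?muln0 ?muln1 //.
  by have := swap_optimal_edge S_opt Fxy cr; rewrite /one; lia.
have two_le : #|V| * 2 <= \sum_x (cut_deg S x + one x).
  rewrite -sum_nat_const; apply: leq_sum => v _.
  have := bisection_cut_deg_gt0 v eq_S S_opt.
  by rewrite /one; case: (cut_deg S v) => [|[|n]].
move: two_le; rewrite big_split /= sum_cut_deg; lia.
Qed.

Lemma exists_large_bisection m :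
  #|V| = 2 * m -> exists2 S : {set V}, #|S| = m & 2 * #|V| <= 3 * cut_size S.
Proof.
move=> cardV; have [|S0 cardS0 _] := @exists_small_cut m; first lia.
have [S /eqP cardS S_max] :=
  @arg_maxnP _ S0 (fun T => #|T| == m) cut_size (introT eqP cardS0).
exists S => //; apply: bisection_cut_size_large.
  by have := cardsC S; lia.
by apply: max_cut_swap_optimal => T cardT; apply: S_max; rewrite cardT cardS.
Qed.

Lemma two_clique_copy n (w0 : 'I_n) (A : {set 'I_n}) S :
  #|V| = n -> #|S| = #|A| ->
  exists f : V -> 'I_n, [/\ injective f,
    col_edges F f (fun i j => ~~ two_clique_red A i j) = cut_size S &
    col_edges F f (two_clique_red A) + cut_size S = #|V|].
Proof.
move=> cardV cardS.
have [|f [f_inj fA]] := exists_inj_transport_set w0 _ cardS; first by rewrite card_ord.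
have red_sym : symmetric (two_clique_red A) by move=> i j; rewrite /two_clique_red eq_sym.
have blueE : 2 * col_edges F f (fun i j => ~~ two_clique_red A i j) = 2 * cut_size S.
  rewrite col_edgesE // -?sum_cut_deg; last by move=> i j; rewrite red_sym.
  by apply: eq_bigr => u _; apply: eq_bigr => v _; rewrite /two_clique_red !fA.
have redE : 2 * col_edges F f (two_clique_red A) + 2 * cut_size S = 2 * #|V|.
  rewrite col_edgesE // -sum_cut_deg -big_split mulnC -sum_nat_const.
  apply: eq_bigr => u _; rewrite -(F_reg u) -big_split; apply: eq_bigr => v _.
  rewrite /= /two_clique_red /crossing !fA.
  by case: (F u v); case: (u \in S); case: (v \in S).
by exists f; split=> //; lia.
Qed.

End Regular.
End Cuts.

Lemma two_factor_deg (V : finType) (F : rel V) : two_factor F -> forall w, deg F w = 2.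
Proof.
move=> [_ [_ F2]] w; rewrite /deg -(F2 w) -sum1dep_card [RHS]big_mkcond.
by apply: eq_bigr => u _; case: (F w u).
Qed.

Theorem lemma3p9 (k : nat) (V : finType) (F : rel V) (A : {set 'I_(4 * k)}) :
  1 <= k -> #|V| = 4 * k -> two_factor F -> #|A| = 2 * k ->
  (exists f : V -> 'I_(4 * k), injective f /\
     4 * k - 2 <= col_edges F f (two_clique_red A)) /\
  (exists f : V -> 'I_(4 * k), injective f /\
     8 * k <= 3 * col_edges F f (fun x y => ~~ two_clique_red A x y)).
Proof.
move=> k_gt0 cardV F2 cardA; have [F_sym [F_irr _]] := F2.
have F_reg := two_factor_deg F2.
have n_gt0 : 0 < 4 * k by lia.
have copy := two_clique_copy F_sym F_irr F_reg (Ordinal n_gt0) cardV.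
split.
  have [|S cardS cutS] := @exists_small_cut _ _ F_sym F_irr F_reg (2 * k); first lia.
  have eqSA : #|S| = #|A| by rewrite cardS cardA.
  have [f [f_inj _ red]] := copy A S eqSA.
  by exists f; split=> //; lia.
have [|S cardS cutS] := @exists_large_bisection _ _ F_sym F_irr F_reg (2 * k); first lia.
have eqSA : #|S| = #|A| by rewrite cardS cardA.
have [f [f_inj blue _]] := copy A S eqSA.
by exists f; split=> //; rewrite blue; lia.
Qed.
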